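(* Let $K_{3,3}$ be the complete bipartite graph on vertex set $[6]$ with parts $\{1,3,6\}$ and $\{2,4,5\}$, i.e. with edges $(1,2),(1,4),(1,5),(2,3),(2,6),(3,4),(3,5),(4,6),(5,6)$. Then the abelian group $H_1(K_{3,3};\mathbb Z)$ contains an element of order $2$ (i.e. it has $\mathbb Z_2$-torsion).
   Context: Let $G$ be a simple graph with vertex set $[n]$; an edge $\{i,j\}$ with $i<j$ is written $(i,j)$, and $E(G)$ is totally ordered lexicographically. For $F\subseteq E(G)$ let $\beta(F)$ be the partition of $[n]$ into the vertex sets of the connected components of $([n],F)$, and $\mathfrak S_{\beta(F)}\subseteq\mathfrak S_n$ the subgroup of permutations mapping each block to itself. For a commutative ring $R$ let $a_F=\sum_{\sigma\in\mathfrak S_{\beta(F)}}\sigma\in R[\mathfrak S_n]$ and $\mathcal M_F=R[\mathfrak S_n]a_F$; for $e\in F$, $\mathcal M_F\subseteq\mathcal M_{F\setminus e}$. The chain complex is $C_i(G;R)=\bigoplus_{|F|=i}\mathcal M_F$ with $d_i(x)=\sum_{e\in F}(-1)^{|\{f\in F: f<e\}|}\iota_{F,F\setminus e}(x)$ for $x\in\mathcal M_F$, $\iota$ the inclusion into the summand $\mathcal M_{F\setminus e}$; $H_i(G;R)=\ker d_i/\operatorname{im}d_{i+1}$ (the $q$-degree zero chromatic symmetric homology). *)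

From HB Require Import structures.
From mathcomp Require Import all_boot all_order all_fingroup all_algebra.
Set Implicit Arguments. Unset Strict Implicit. Unset Printing Implicit Defensive.
Import GRing.Theory.
Local Open Scope ring_scope.

(* Vertices are 'I_n (vertex k+1 of the paper is k here).  A graph is given
   by its edge list E, listed in increasing lexicographic order; an edge
   subset F is a set of indices into E, so the order on edges is the order
   of indices. *)

(* The group ring Z[S_n]: integer-valued functions on permutations. *)
Definition ZS (n : nat) := {ffun {perm 'I_n} -> int}.

Definition zmul n (a b : ZS n) : ZS n :=
  [ffun s => \sum_(t : {perm 'I_n}) a t * b (t^-1 * s)%g].

Section Graph.
Variables (n : nat) (E : seq ('I_n * 'I_n)).

Definition edgeset := {set 'I_(size E)}.

Definition edge_rel (F : edgeset) : rel 'I_n :=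
  fun u v => [exists e in F, (nth (u, v) E e == (u, v)) || (nth (u, v) E e == (v, u))].

(* the block of beta(F) containing x: its connected component in ([n],F) *)
Definition block (F : edgeset) (x : 'I_n) : {set 'I_n} :=
  [set y | connect (edge_rel F) x y].

Definition in_Sbeta (F : edgeset) (s : {perm 'I_n}) : bool :=
  [forall x, s @: block F x == block F x].

Definition aF (F : edgeset) : ZS n :=
  [ffun s => if in_Sbeta F s then 1 else 0].

Definition inM (F : edgeset) (x : ZS n) : Prop := exists y : ZS n, x = zmul y (aF F).

(* ambient group containing every C_i: families indexed by edge subsets *)
Definition chain := {ffun edgeset -> ZS n}.

(* c lies in C_i = (+)_{|F| = i} M_F *)
Definition is_chain (i : nat) (c : chain) : Prop :=
  (forall F : edgeset, #|F| <> i -> c F = 0) /\ (forall F : edgeset, inM F (c F)).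

Definition bd (c : chain) : chain :=
  [ffun F' : edgeset => \sum_(e : 'I_(size E) | e \notin F')
      (c (e |: F')) *~ ((-1) ^+ #|[set f in e |: F' | (f < e)%N]|)].

Definition H1_has_2torsion : Prop :=
  exists x : chain, [/\ is_chain 1 x, bd x = 0,
     ~ (exists y : chain, is_chain 2 y /\ bd y = x) &
     exists y : chain, is_chain 2 y /\ bd y = x *+ 2].
End Graph.

Definition K33 : seq ('I_6 * 'I_6) :=
  [:: (inord 0, inord 1); (inord 0, inord 3); (inord 0, inord 4);
      (inord 1, inord 2); (inord 1, inord 5); (inord 2, inord 3);
      (inord 2, inord 4); (inord 3, inord 5); (inord 4, inord 5)].

From mathcomp Require Import all_boot all_order all_fingroup all_algebra.
Set Implicit Arguments. Unset Strict Implicit. Unset Printing Implicit Defensive.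
Import GRing.Theory.

(* The class of an explicit 1-cycle x is 2-torsion: an explicit 2-chain y has boundary 2x,
   while x is not a boundary.  For the latter we use the Z/2-valued functional
     psi(c) = sum_e sum_s c_e(s) u_e(s(1), s(3)),
   where each u_e is the indicator of a few unordered pairs of vertices.  Modulo 2 the signs
   of the differential disappear, so psi(d y) = sum_{e<f} <y_{ef}, u_e + u_f>, and each term
   vanishes because y_{ef} lies in Z[S_6] a_{ef} and u_e + u_f has even sum over every left
   coset of S_beta({e,f}); on the other hand psi(x) = 1.  Elements of Z[S_6] are handled as
   integer combinations of permutation words, so that every identity between the explicit
   chains (d x = 0, d y = 2x, the coset parities and psi(x) = 1) is decided by computation. *)

Local Notation word_sum := (seq (int * seq nat)).

Section PermWords.
Variable n : nat.

Definition perm_word (s : {perm 'I_n}) : seq nat := [seq val (s i) | i <- enum 'I_n].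

Definition word_perm (g : seq nat) : {perm 'I_n} := odflt 1%g [pick s | perm_word s == g].

Definition word_mul (g h : seq nat) : seq nat := [seq nth 0%N h i | i <- g].

Lemma size_perm_word s : size (perm_word s) = n.
Proof. by rewrite size_map size_enum_ord. Qed.

Lemma nth_perm_word s (i : 'I_n) : nth 0%N (perm_word s) i = s i.
Proof. by rewrite (nth_map i) ?size_enum_ord // nth_ord_enum. Qed.

Lemma nth_perm_word_lt s i : (i < n)%N -> (nth 0%N (perm_word s) i < n)%N.
Proof. by move=> lt_in; rewrite -[i]/(nat_of_ord (Ordinal lt_in)) nth_perm_word ltn_ord. Qed.

Lemma perm_word_inj : injective perm_word.
Proof. by move=> s t est; apply/permP => i; apply: ord_inj; rewrite -!nth_perm_word est. Qed.

Lemma perm_word_perm_eq s : perm_eq (perm_word s) (iota 0 n).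
Proof.
rewrite -val_enum_ord /perm_word (map_comp val s); apply: perm_map.
apply: uniq_perm; rewrite ?(map_inj_uniq (@perm_inj _ s)) ?enum_uniq //.
move=> i; rewrite mem_enum; apply/mapP; exists ((s^-1)%g i); by rewrite ?mem_enum ?permKV.
Qed.

Lemma perm_wordK : cancel perm_word word_perm.
Proof.
move=> s; rewrite /word_perm; case: pickP => [t /eqP/perm_word_inj // | /(_ s)].
by rewrite eqxx.
Qed.

(* Onto because perm_word injects the n! permutations into the n! words of [permutations]. *)
Lemma word_permK g : perm_eq g (iota 0 n) -> perm_word (word_perm g) = g.
Proof.
move=> pg; set W := [seq perm_word s | s <- enum {perm 'I_n}].
have uW : uniq W by rewrite map_inj_uniq ?enum_uniq //; exact: perm_word_inj.
have sW : {subset W <= permutations (iota 0 n)}.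
  by move=> _ /mapP [s _ ->]; rewrite mem_permutations perm_word_perm_eq.
have szW : size (permutations (iota 0 n)) <= size W.
  by rewrite size_permutations ?iota_uniq // size_iota size_map -cardE card_Sn.
have [_ /(_ g)] := uniq_min_size uW sW szW.
by rewrite mem_permutations pg => /mapP [s _ ->]; rewrite perm_wordK.
Qed.

Lemma perm_wordM s t : perm_word (s * t)%g = word_mul (perm_word s) (perm_word t).
Proof.
apply: (@eq_from_nth _ 0%N); first by rewrite /word_mul size_map !size_perm_word.
move=> i; rewrite size_perm_word => lt_in.
rewrite /word_mul (nth_map 0%N) ?size_perm_word // -[i]/(nat_of_ord (Ordinal lt_in)).
by rewrite !nth_perm_word permM.
Qed.

Lemma perm_word_eq s g : perm_eq g (iota 0 n) -> (perm_word s == g) = (s == word_perm g).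
Proof. by move=> pg; rewrite -(inj_eq perm_word_inj) word_permK. Qed.

Lemma word_mul_eq (x s : {perm 'I_n}) g : perm_eq g (iota 0 n) ->
  (word_mul (perm_word x) g == perm_word s) = (g == perm_word (x^-1 * s)%g).
Proof.
move=> wg; rewrite -(word_permK wg) -perm_wordM !(inj_eq perm_word_inj).
by apply/eqP/eqP => [<- | ->]; rewrite ?mulKg ?mulKVg.
Qed.

End PermWords.

Section GroupRing.
Local Open Scope ring_scope.
Variable n : nat.

Lemma sum_zmul (R : pzRingType) (z a : ZS n) (h : {perm 'I_n} -> R) :
  \sum_s ((zmul z a) s)%:~R * h s = \sum_t (z t)%:~R * \sum_s (a s)%:~R * h (t * s)%g.
Proof.
under eq_bigr do rewrite ffunE rmorph_sum mulr_suml.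
rewrite exchange_big /=; apply: eq_bigr => t _; rewrite mulr_sumr.
rewrite (reindex_inj (mulgI t)) /=; apply: eq_bigr => s _.
by rewrite mulKg intrM mulrA.
Qed.

Lemma inM0 (E : seq ('I_n * 'I_n)) (F : edgeset E) : inM F 0.
Proof. by exists 0; apply/ffunP => s; rewrite !ffunE big1 // => t _; rewrite ffunE mul0r. Qed.

End GroupRing.

Section WordSums.
Local Open Scope ring_scope.

Definition coef (A : word_sum) (g : seq nat) : int :=
  foldr (fun p c => (if p.2 == g then p.1 else 0) + c) 0 A.

Definition ws_eqb (A B : word_sum) : bool :=
  all (fun g => coef A g == coef B g) (map snd (A ++ B)).

Definition ws_mul (A B : word_sum) : word_sum :=
  [seq (a.1 * b.1, word_mul a.2 b.2) | a <- A, b <- B].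

Definition ws_scale (c : int) (A : word_sum) : word_sum :=
  [seq (c * a.1, a.2) | a <- A].

Lemma coefE A g : coef A g = \sum_(p <- A) (if p.2 == g then p.1 else 0).
Proof. by elim: A => [|p A IH] /=; rewrite ?big_nil ?big_cons ?IH. Qed.

Lemma coef_ones (L : seq (seq nat)) g : coef [seq (1, h) | h <- L] g = Posz (count_mem g L).
Proof.
elim: L => [|h L IH] //=; rewrite IH eq_sym.
by case: (g == h); rewrite /= ?add0r // PoszD addrC.
Qed.

Variable n : nat.

Definition perm_words (A : word_sum) : bool :=
  all (fun p => perm_eq p.2 (iota 0 n)) A.

Definition zs_of (A : word_sum) : ZS n := [ffun s => coef A (perm_word s)].

Lemma zs_of_nil : zs_of [::] = 0.
Proof. by apply/ffunP => s; rewrite !ffunE. Qed.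

Lemma zs_of_cat A B : zs_of (A ++ B) = zs_of A + zs_of B.
Proof. by apply/ffunP => s; rewrite !ffunE !coefE big_cat. Qed.

Lemma zs_of_flatten (As : seq word_sum) :
  zs_of (flatten As) = \sum_(A <- As) zs_of A.
Proof.
elim: As => [|A As IH]; first by rewrite big_nil zs_of_nil.
by rewrite big_cons zs_of_cat IH.
Qed.

Lemma zs_of_scale c A : zs_of (ws_scale c A) = zs_of A *~ c.
Proof.
apply/ffunP => s; rewrite ffunMzE !ffunE !coefE big_map mulrzz [RHS]mulrC mulr_sumr.
by apply: eq_bigr => p _; rewrite /= [RHS]fun_if mulr0.
Qed.

Lemma zs_of_eq A B : ws_eqb A B -> zs_of A = zs_of B.
Proof.
move=> /allP eqAB; apply/ffunP => s; rewrite !ffunE.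
have [/eqAB/eqP // | notin] := boolP (perm_word s \in map snd (A ++ B)).
rewrite !coefE !big1_seq // => p /andP [_ pAB]; rewrite ifN //.
all: by apply: contraNneq notin => <-; rewrite map_f // mem_cat pAB ?orbT.
Qed.

Lemma sum_zs_of (R : pzRingType) A (h : {perm 'I_n} -> R) : perm_words A ->
  \sum_s (zs_of A s)%:~R * h s = \sum_(p <- A) p.1%:~R * h (word_perm n p.2).
Proof.
move=> /allP wA; under eq_bigr do rewrite ffunE coefE rmorph_sum mulr_suml.
rewrite exchange_big /=; apply: eq_big_seq => p /wA wp.
rewrite (bigD1 (word_perm n p.2)) //= -{1}(word_permK wp) eqxx big1 ?addr0 // => s.
by rewrite [p.2 == _]eq_sym perm_word_eq // => /negbTE ->; rewrite mul0r.
Qed.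

Lemma zmul_zs_of A B : perm_words A -> perm_words B ->
  zmul (zs_of A) (zs_of B) = zs_of (ws_mul A B).
Proof.
move=> wA /allP wB; apply/ffunP => s; rewrite ffunE.
under eq_bigr do rewrite -[zs_of A _]intz.
rewrite sum_zs_of // ffunE coefE big_allpairs_dep; apply: eq_big_seq => a /(allP wA) wa.
rewrite intz ffunE coefE mulr_sumr; apply: eq_big_seq => b /wB wb /=.
by rewrite -(word_permK wa) word_mul_eq // perm_wordK; case: ifP; rewrite ?mulr0.
Qed.

Lemma perm_words_mul A B : perm_words A -> perm_words B -> perm_words (ws_mul A B).
Proof.
move=> /allP wA /allP wB; apply/allP => _ /allpairsP [[a b] [/wA wa /wB wb ->]] /=.
by rewrite -(word_permK wa) -(word_permK wb) -perm_wordM perm_word_perm_eq.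
Qed.

End WordSums.

Lemma enum_set2_ord m (a b : 'I_m) : (a < b)%N -> enum [set a; b] = [:: a; b].
Proof.
move=> lt_ab; apply: (irr_sorted_eq (leT := fun u v : 'I_m => (u < v)%N)).
- by move=> u v w; apply: ltn_trans.
- by move=> u; rewrite ltnn.
- rewrite /enum_mem -enumT; apply: sorted_filter; first by move=> u v w; apply: ltn_trans.
  by have := iota_ltn_sorted 0 m; rewrite -val_enum_ord sorted_map.
- by rewrite /= lt_ab.
- by move=> u; rewrite mem_enum !inE.
Qed.

Lemma card_lt_pair m (e f : 'I_m) : #|[set g in e |: [set f] | (g < e)%N]| = (f < e)%N.
Proof.
have -> : [set g in e |: [set f] | (g < e)%N] = [set g in [set f] | (g < e)%N].
  by apply/setP => g; rewrite !inE; case: eqP => // ->; rewrite ltnn !andbF.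
case: ltnP => [lt_fe | le_ef].
  by apply/eqP/cards1P; exists f; apply/setP => g; rewrite !inE andb_idr // => /eqP ->.
apply/eqP; rewrite cards_eq0; apply/eqP/setP => g.
by rewrite !inE; case: eqP => // ->; rewrite ltnNge le_ef.
Qed.

Lemma all_iota_lt m (P : pred nat) i : (i < m)%N -> all P (iota 0 m) -> P i.
Proof. by move=> lt_im /allP; apply; rewrite mem_iota. Qed.

Section ReachNat.
Local Open Scope ring_scope.
Variables (n : nat) (En : seq (nat * nat)).

Definition nat_adj (Fn : seq nat) (a b : nat) : bool :=
  has (fun i => (nth (0, 0) En i == (a, b)) || (nth (0, 0) En i == (b, a)))%N Fn.

Definition reach_step (Fn S : seq nat) : seq nat :=
  S ++ [seq j <- iota 0 n | has (nat_adj Fn ^~ j) S].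

Definition reach (Fn : seq nat) (a : nat) : seq nat := iter n (reach_step Fn) [:: a].

Definition reach_closed (Fn : seq nat) : bool :=
  all (fun a => let R := reach Fn a in all (fun b =>
    (b \in R) ==> all (fun c => nat_adj Fn b c ==> (c \in R)) (iota 0 n)) (iota 0 n)) (iota 0 n).

Lemma reach_closedP Fn a b c : reach_closed Fn -> (a < n)%N -> (b < n)%N -> (c < n)%N ->
  b \in reach Fn a -> nat_adj Fn b c -> c \in reach Fn a.
Proof.
move=> /allP /(_ a) + lt_an lt_bn lt_cn bR; rewrite mem_iota lt_an => /(_ isT) /=.
move=> /allP /(_ b); rewrite mem_iota lt_bn bR => /(_ isT) /allP /(_ c).
by rewrite mem_iota lt_cn => /(_ isT) /implyP.
Qed.

Definition stab_words (Fn : seq nat) : word_sum :=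
  let R := [seq reach Fn a | a <- iota 0 n] in
  [seq (1, g) | g <- permutations (iota 0 n)
              & all (fun i => nth 0%N g i \in nth [::] R i) (iota 0 n)].

Lemma perm_words_stab Fn : perm_words n (stab_words Fn).
Proof. by apply/allP => _ /mapP [g + ->]; rewrite mem_filter mem_permutations => /andP []. Qed.

End ReachNat.

Section BlockStabilizer.
Local Open Scope ring_scope.
Variables (n : nat) (E : seq ('I_n * 'I_n)) (En : seq (nat * nat)).
Hypothesis E_nat : [seq (val p.1, val p.2) | p <- E] = En.

Lemma in_SbetaE (F : edgeset E) s :
  in_Sbeta F s = [forall x, connect (edge_rel F) x (s x)].
Proof.
apply/forallP/forallP => sF x.
  have : s x \in block F x by rewrite -(eqP (sF x)); apply: imset_f; rewrite inE connect0.
  by rewrite inE.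
rewrite eqEcard card_imset ?leqnn ?andbT; last exact: perm_inj.
by apply/subsetP => _ /imsetP [y xy ->]; rewrite !inE in xy *; apply: connect_trans xy (sF y).
Qed.

Definition edge_indices (F : edgeset E) : seq nat := [seq val e | e <- enum F].

Variable F : edgeset E.
Let Fn := edge_indices F.

Lemma edge_rel_nat u v : edge_rel F u v = nat_adj En Fn u v.
Proof.
have edgeE (e : 'I_(size E)) : ((nth (0, 0) En e == (u : nat, v : nat)) ||
    (nth (0, 0) En e == (v : nat, u : nat)))%N =
    (nth (u, v) E e == (u, v)) || (nth (u, v) E e == (v, u)).
  by rewrite -E_nat (nth_map (u, v)) // !xpair_eqE !val_eqE.
rewrite /nat_adj has_map; apply/existsP/hasP => [[e /andP [eF uv]] | [e eF uv]].
  by exists e; rewrite ?mem_enum //= edgeE.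
by exists e; rewrite -mem_enum eF -edgeE.
Qed.

Lemma reach_self k a : a \in iter k (reach_step n En Fn) [:: a].
Proof. by elim: k => [|k IH] /=; rewrite ?mem_seq1 // mem_cat IH. Qed.

Lemma reach_connect k (x : 'I_n) j : j \in iter k (reach_step n En Fn) [:: val x] ->
  exists2 y : 'I_n, j = y & connect (edge_rel F) x y.
Proof.
elim: k j => [|k IH] j /=; first by rewrite mem_seq1 => /eqP ->; exists x.
rewrite mem_cat => /orP [/IH // |].
rewrite mem_filter mem_iota add0n => /andP [/hasP [i /IH [y -> xy] yj] lt_jn].
exists (Ordinal lt_jn) => //; apply: connect_trans xy (connect1 _).
by rewrite edge_rel_nat.
Qed.

Hypothesis closedF : reach_closed n En Fn.

Lemma connect_reach (x y : 'I_n) : connect (edge_rel F) x y = (val y \in reach n En Fn x).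
Proof.
apply/idP/idP => [/connectP [p + ->] | /reach_connect [z /val_inj -> //]].
have : val x \in reach n En Fn x by apply: reach_self.
elim: p {1 3 4}x => [|z p IH] w wR //= /andP [wz pz]; apply: IH pz.
by apply: (reach_closedP (b := w) closedF); rewrite ?ltn_ord -?edge_rel_nat.
Qed.

Lemma in_Sbeta_reach s :
  in_Sbeta F s = all (fun i => nth 0%N (perm_word s) i \in reach n En Fn i) (iota 0 n).
Proof.
rewrite in_SbetaE; apply/forallP/allP => [sF i | sF x].
  rewrite mem_iota => /= lt_in; rewrite -[i]/(nat_of_ord (Ordinal lt_in)).
  by rewrite nth_perm_word -connect_reach.
by have := sF x; rewrite mem_iota ltn_ord connect_reach nth_perm_word => ->.
Qed.

Lemma aF_stab_words : aF F = zs_of n (stab_words n En Fn).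
Proof.
apply/ffunP => s; rewrite !ffunE coef_ones count_uniq_mem; last first.
  by rewrite filter_uniq ?permutations_uniq.
rewrite mem_filter mem_permutations perm_word_perm_eq andbT in_Sbeta_reach.
rewrite [in RHS](@eq_in_all _ _ (fun i => nth 0%N (perm_word s) i \in reach n En Fn i)).
  by case: all.
by move=> i; rewrite mem_iota /= => lt_in; rewrite (nth_map 0%N) ?size_iota // nth_iota.
Qed.

End BlockStabilizer.

Section Pairing.
Local Open Scope ring_scope.

Lemma sum_ord_pairs (V : nmodType) m (A : 'I_m -> 'I_m -> V) :
  \sum_(e : 'I_m) \sum_(f | f != e) A e f =
  \sum_(e : 'I_m) \sum_(f : 'I_m | (e < f)%N) (A e f + A f e).
Proof.
have splitE (e : 'I_m) : \sum_(f | f != e) A e f =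
    \sum_(f : 'I_m | (e < f)%N) A e f + \sum_(f : 'I_m | (f < e)%N) A e f.
  rewrite (bigID (fun f : 'I_m => (e < f)%N)) /=; congr (_ + _); apply: eq_bigl => f.
    by rewrite andbC -val_eqE; case: ltngtP.
  by rewrite -val_eqE; case: ltngtP.
under eq_bigr do rewrite splitE; under [RHS]eq_bigr do rewrite big_split.
rewrite !big_split /=; congr (_ + _).
by rewrite (exchange_big_dep predT).
Qed.

Lemma Z2_sign k : ((-1) ^+ k : 'Z_2) = 1.
Proof. by rewrite (_ : -1 = 1 :> 'Z_2) ?expr1n //; apply/val_inj. Qed.

Variables (n : nat) (E : seq ('I_n * 'I_n)).

Definition pairing (w : 'I_(size E) -> {perm 'I_n} -> 'Z_2) (c : chain E) : 'Z_2 :=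
  \sum_e \sum_s (c [set e] s)%:~R * w e s.

(* Mod 2 the signs of [bd] vanish, and y_{ef} = z a_{ef} contributes
   <z a_{ef}, w e + w f> = sum_t z(t) sum_s a_{ef}(s) (w e + w f)(t s). *)
Lemma pairing_bd w (y : chain E) :
    (forall (e f : 'I_(size E)) t, (e < f)%N ->
       \sum_s (@aF n E [set e; f] s)%:~R * (w e (t * s)%g + w f (t * s)%g) = 0) ->
    (forall F, inM F (y F)) -> pairing w (bd y) = 0.
Proof.
move=> w_coset yM.
transitivity (\sum_e \sum_(f | f != e) \sum_s (y [set e; f] s)%:~R * w e s).
  apply: eq_bigr => e _; under eq_bigr do rewrite ffunE sum_ffunE rmorph_sum mulr_suml.
  rewrite exchange_big; apply: eq_big => [f | f _]; first by rewrite in_set1.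
  apply: eq_bigr => s _ /=; rewrite ffunMzE mulrzz intrM intr_sign Z2_sign mulr1.
  by rewrite setUC.
rewrite sum_ord_pairs big1 // => e _; rewrite big1 // => f lt_ef.
rewrite [[set f; e]]setUC -big_split /=; under eq_bigr do rewrite -mulrDr.
by have [z ->] := yM [set e; f]; rewrite sum_zmul big1 // => t _; rewrite w_coset ?mulr0.
Qed.

End Pairing.

(* [vm_compute] cannot evaluate [inord] (it goes through the opaque [idP]), so the
   computations use the edges of K33 as plain numbers. *)
Definition K33_nat : seq (nat * nat) :=
  [:: (0, 1); (0, 3); (0, 4); (1, 2); (1, 5); (2, 3); (2, 4); (3, 5); (4, 5)].

Lemma K33_natE : [seq (val p.1, val p.2) | p <- K33] = K33_nat.
Proof. by rewrite /= !inordK. Qed.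

(* Permutations are given as words [:: s 0; ...; s 5].  The cycle is
   x_{e} = w_e a_{e}, where [nth [::] x_data e] lists w_e as groups of words sharing a
   coefficient; the 2-chain is y_{ef} = z_{ef} a_{ef} for e < f, where z_{ef} is the sum of
   the words listed with (e, f) in [y_data].  [psi_pairs] lists the pairs defining u_e. *)
Definition x_data : seq (seq (int * seq (seq nat))) := [::
 [::
  ((-1)%Z, [::
     [:: 0; 1; 2; 3; 4; 5]; [:: 0; 1; 3; 2; 4; 5]; [:: 0; 1; 4; 2; 3; 5];
     [:: 0; 1; 5; 2; 3; 4]; [:: 0; 1; 5; 2; 4; 3]; [:: 0; 3; 1; 2; 4; 5];
     [:: 0; 3; 2; 1; 4; 5]; [:: 0; 4; 1; 2; 3; 5]; [:: 0; 4; 1; 3; 2; 5];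
     [:: 0; 4; 2; 3; 1; 5]; [:: 0; 4; 3; 1; 2; 5]; [:: 0; 4; 3; 2; 1; 5];
     [:: 0; 4; 5; 1; 2; 3]; [:: 0; 4; 5; 1; 3; 2]; [:: 0; 4; 5; 2; 1; 3];
     [:: 0; 4; 5; 2; 3; 1]; [:: 0; 4; 5; 3; 1; 2]; [:: 0; 4; 5; 3; 2; 1];
     [:: 2; 0; 1; 3; 4; 5]; [:: 2; 0; 1; 4; 3; 5]; [:: 2; 0; 4; 1; 3; 5];
     [:: 2; 0; 4; 3; 1; 5]; [:: 2; 0; 5; 1; 4; 3]; [:: 2; 0; 5; 4; 1; 3];
     [:: 2; 3; 0; 1; 4; 5]; [:: 2; 3; 0; 4; 1; 5]; [:: 2; 3; 4; 0; 1; 5];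
     [:: 2; 3; 5; 0; 4; 1]; [:: 2; 4; 0; 1; 3; 5]; [:: 2; 4; 0; 3; 1; 5];
     [:: 2; 4; 3; 0; 1; 5]; [:: 2; 4; 5; 0; 3; 1]; [:: 2; 4; 5; 3; 0; 1];
     [:: 2; 5; 0; 1; 3; 4]; [:: 2; 5; 0; 3; 1; 4]; [:: 2; 5; 0; 3; 4; 1];
     [:: 2; 5; 0; 4; 3; 1]; [:: 2; 5; 3; 0; 1; 4]; [:: 2; 5; 3; 0; 4; 1];
     [:: 2; 5; 3; 4; 0; 1]; [:: 2; 5; 4; 0; 1; 3]; [:: 3; 0; 1; 2; 4; 5];
     [:: 3; 0; 1; 4; 2; 5]; [:: 3; 0; 2; 1; 4; 5]; [:: 3; 0; 2; 4; 1; 5];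
     [:: 3; 0; 5; 1; 2; 4]; [:: 3; 0; 5; 2; 1; 4]; [:: 3; 0; 5; 2; 4; 1];
     [:: 3; 0; 5; 4; 2; 1]; [:: 3; 2; 0; 1; 4; 5]; [:: 3; 2; 0; 1; 5; 4];
     [:: 3; 2; 0; 4; 1; 5]; [:: 3; 2; 0; 5; 1; 4]; [:: 3; 2; 5; 0; 1; 4];
     [:: 3; 2; 5; 0; 4; 1]; [:: 3; 4; 0; 2; 1; 5]; [:: 3; 4; 2; 0; 1; 5];
     [:: 3; 4; 5; 0; 1; 2]; [:: 3; 4; 5; 2; 0; 1]; [:: 3; 5; 0; 1; 2; 4];
     [:: 3; 5; 0; 1; 4; 2]; [:: 3; 5; 0; 2; 1; 4]; [:: 3; 5; 0; 4; 1; 2];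
     [:: 3; 5; 2; 0; 1; 4]; [:: 3; 5; 4; 0; 2; 1]; [:: 3; 5; 4; 2; 0; 1];
     [:: 4; 0; 2; 1; 3; 5]; [:: 4; 0; 3; 1; 2; 5]; [:: 4; 0; 3; 2; 1; 5];
     [:: 4; 0; 5; 1; 2; 3]; [:: 4; 0; 5; 1; 3; 2]; [:: 4; 0; 5; 3; 1; 2];
     [:: 4; 0; 5; 3; 2; 1]; [:: 4; 2; 0; 1; 3; 5]; [:: 4; 2; 0; 3; 1; 5];
     [:: 4; 2; 3; 0; 1; 5]; [:: 4; 2; 5; 0; 1; 3]; [:: 4; 2; 5; 0; 3; 1];
     [:: 4; 2; 5; 3; 0; 1]; [:: 4; 3; 0; 1; 2; 5]; [:: 4; 3; 0; 2; 1; 5];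
     [:: 4; 3; 2; 0; 1; 5]; [:: 4; 3; 5; 0; 1; 2]; [:: 4; 3; 5; 0; 2; 1];
     [:: 4; 3; 5; 2; 0; 1]; [:: 4; 5; 0; 1; 3; 2]; [:: 4; 5; 0; 3; 1; 2];
     [:: 4; 5; 2; 0; 1; 3]; [:: 4; 5; 2; 0; 3; 1]; [:: 4; 5; 2; 3; 0; 1];
     [:: 4; 5; 3; 0; 2; 1]; [:: 4; 5; 3; 2; 0; 1]]);
  ((-2)%Z, [::
     [:: 2; 4; 5; 0; 1; 3]; [:: 2; 5; 0; 1; 4; 3]; [:: 2; 5; 0; 4; 1; 3];
     [:: 3; 4; 0; 1; 2; 5]; [:: 3; 4; 5; 0; 2; 1]; [:: 3; 5; 0; 2; 4; 1];
     [:: 3; 5; 0; 4; 2; 1]; [:: 3; 5; 2; 0; 4; 1]; [:: 3; 5; 2; 4; 0; 1];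
     [:: 4; 0; 1; 2; 3; 5]; [:: 4; 0; 1; 3; 2; 5]; [:: 4; 0; 2; 3; 1; 5];
     [:: 4; 0; 5; 2; 1; 3]; [:: 4; 0; 5; 2; 3; 1]; [:: 4; 5; 0; 1; 2; 3];
     [:: 4; 5; 0; 2; 1; 3]; [:: 4; 5; 0; 2; 3; 1]; [:: 4; 5; 0; 3; 2; 1]])];
 [::
  ((-1)%Z, [::
     [:: 0; 1; 2; 4; 3; 5]; [:: 0; 1; 3; 4; 2; 5]; [:: 0; 1; 5; 2; 3; 4];
     [:: 0; 1; 5; 2; 4; 3]; [:: 0; 1; 5; 3; 2; 4]; [:: 0; 1; 5; 4; 2; 3];
     [:: 0; 2; 1; 3; 4; 5]; [:: 0; 2; 1; 3; 5; 4]; [:: 0; 2; 1; 4; 3; 5];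
     [:: 0; 2; 1; 5; 3; 4]; [:: 0; 2; 3; 1; 4; 5]; [:: 0; 2; 3; 1; 5; 4];
     [:: 0; 2; 3; 4; 1; 5]; [:: 0; 2; 3; 5; 1; 4]; [:: 0; 2; 5; 1; 3; 4];
     [:: 0; 2; 5; 1; 4; 3]; [:: 0; 2; 5; 3; 1; 4]; [:: 0; 2; 5; 3; 4; 1];
     [:: 0; 3; 1; 4; 2; 5]; [:: 0; 3; 2; 4; 1; 5]; [:: 0; 3; 4; 1; 2; 5];
     [:: 0; 3; 5; 1; 2; 4]; [:: 0; 3; 5; 1; 4; 2]; [:: 0; 3; 5; 2; 1; 4];
     [:: 0; 3; 5; 2; 4; 1]; [:: 0; 3; 5; 4; 2; 1]; [:: 0; 4; 1; 2; 3; 5];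
     [:: 0; 4; 1; 3; 2; 5]; [:: 0; 4; 2; 1; 3; 5]; [:: 0; 4; 2; 3; 1; 5];
     [:: 0; 4; 3; 1; 2; 5]; [:: 0; 4; 5; 1; 2; 3]; [:: 0; 4; 5; 1; 3; 2];
     [:: 0; 4; 5; 2; 1; 3]; [:: 0; 4; 5; 2; 3; 1]; [:: 0; 4; 5; 3; 2; 1];
     [:: 0; 5; 1; 2; 3; 4]; [:: 0; 5; 1; 3; 2; 4]; [:: 0; 5; 1; 3; 4; 2];
     [:: 0; 5; 1; 4; 3; 2]; [:: 0; 5; 2; 1; 3; 4]; [:: 0; 5; 2; 3; 1; 4];
     [:: 0; 5; 3; 1; 2; 4]; [:: 0; 5; 3; 1; 4; 2]; [:: 0; 5; 3; 2; 1; 4];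
     [:: 0; 5; 3; 4; 1; 2]; [:: 0; 5; 4; 1; 2; 3]; [:: 0; 5; 4; 2; 1; 3];
     [:: 0; 5; 4; 2; 3; 1]; [:: 0; 5; 4; 3; 2; 1]; [:: 2; 0; 1; 3; 4; 5];
     [:: 2; 0; 1; 4; 3; 5]; [:: 2; 0; 3; 1; 4; 5]; [:: 2; 0; 3; 4; 1; 5];
     [:: 2; 0; 4; 1; 3; 5]; [:: 2; 0; 4; 3; 1; 5]; [:: 2; 0; 5; 1; 4; 3];
     [:: 2; 0; 5; 3; 4; 1]; [:: 2; 4; 0; 1; 3; 5]; [:: 2; 4; 0; 3; 1; 5];
     [:: 2; 4; 1; 0; 3; 5]; [:: 4; 0; 1; 3; 2; 5]; [:: 4; 0; 2; 1; 3; 5];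
     [:: 4; 0; 2; 3; 1; 5]; [:: 4; 0; 5; 1; 2; 3]; [:: 4; 0; 5; 1; 3; 2];
     [:: 4; 0; 5; 2; 3; 1]; [:: 4; 1; 5; 0; 2; 3]; [:: 4; 5; 0; 1; 2; 3];
     [:: 4; 5; 0; 1; 3; 2]; [:: 4; 5; 0; 2; 1; 3]; [:: 4; 5; 0; 2; 3; 1];
     [:: 4; 5; 0; 3; 1; 2]; [:: 4; 5; 0; 3; 2; 1]; [:: 4; 5; 2; 0; 1; 3];
     [:: 4; 5; 2; 0; 3; 1]; [:: 4; 5; 2; 1; 0; 3]]);
  ((-2)%Z, [::
     [:: 0; 5; 1; 2; 4; 3]; [:: 0; 5; 1; 4; 2; 3]; [:: 0; 5; 2; 1; 4; 3];
     [:: 0; 5; 2; 3; 4; 1]; [:: 0; 5; 2; 4; 1; 3]; [:: 0; 5; 2; 4; 3; 1];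
     [:: 0; 5; 3; 2; 4; 1]; [:: 0; 5; 3; 4; 2; 1]; [:: 4; 0; 1; 2; 3; 5];
     [:: 4; 0; 5; 3; 2; 1]])];
 [::
  (1%Z, [::
     [:: 0; 4; 2; 3; 1; 5]; [:: 0; 4; 5; 2; 1; 3]; [:: 0; 4; 5; 2; 3; 1];
     [:: 2; 0; 1; 4; 3; 5]; [:: 2; 0; 4; 3; 1; 5]; [:: 2; 3; 0; 1; 4; 5];
     [:: 2; 3; 0; 4; 1; 5]; [:: 2; 3; 1; 0; 4; 5]; [:: 3; 0; 2; 1; 4; 5];
     [:: 3; 0; 2; 4; 1; 5]; [:: 3; 0; 5; 2; 1; 4]; [:: 3; 0; 5; 2; 4; 1];
     [:: 3; 0; 5; 4; 2; 1]; [:: 3; 1; 2; 0; 4; 5]; [:: 3; 1; 5; 0; 2; 4];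
     [:: 3; 1; 5; 2; 0; 4]; [:: 3; 5; 0; 1; 2; 4]; [:: 3; 5; 0; 2; 1; 4];
     [:: 3; 5; 0; 2; 4; 1]; [:: 3; 5; 0; 4; 2; 1]; [:: 3; 5; 1; 0; 2; 4];
     [:: 3; 5; 1; 2; 0; 4]; [:: 3; 5; 2; 0; 1; 4]; [:: 3; 5; 2; 0; 4; 1];
     [:: 3; 5; 2; 1; 0; 4]]);
  ((-1)%Z, [::
     [:: 0; 1; 3; 2; 4; 5]; [:: 0; 1; 3; 4; 2; 5]; [:: 0; 1; 4; 2; 3; 5];
     [:: 0; 1; 4; 3; 2; 5]; [:: 0; 1; 5; 4; 2; 3]; [:: 0; 2; 1; 3; 4; 5];
     [:: 0; 2; 3; 1; 4; 5]; [:: 0; 2; 3; 4; 1; 5]; [:: 0; 2; 4; 1; 3; 5];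
     [:: 0; 2; 5; 1; 3; 4]; [:: 0; 2; 5; 1; 4; 3]; [:: 0; 2; 5; 4; 1; 3];
     [:: 0; 3; 1; 2; 4; 5]; [:: 0; 3; 1; 4; 2; 5]; [:: 0; 3; 5; 1; 2; 4];
     [:: 0; 4; 1; 3; 2; 5]; [:: 0; 4; 5; 1; 2; 3]; [:: 0; 5; 1; 2; 3; 4];
     [:: 0; 5; 1; 2; 4; 3]; [:: 0; 5; 1; 3; 2; 4]; [:: 0; 5; 1; 3; 4; 2];
     [:: 0; 5; 1; 4; 2; 3]; [:: 0; 5; 1; 4; 3; 2]; [:: 0; 5; 2; 1; 4; 3];
     [:: 0; 5; 2; 4; 1; 3]; [:: 0; 5; 3; 1; 4; 2]; [:: 0; 5; 3; 4; 1; 2];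
     [:: 2; 0; 5; 1; 3; 4]; [:: 2; 0; 5; 1; 4; 3]])];
 [::
  (1%Z, [::
     [:: 0; 3; 1; 2; 4; 5]; [:: 0; 3; 1; 4; 2; 5]; [:: 0; 3; 5; 1; 2; 4];
     [:: 0; 4; 1; 2; 3; 5]; [:: 0; 4; 1; 3; 2; 5]; [:: 0; 4; 3; 1; 2; 5];
     [:: 0; 4; 5; 1; 2; 3]; [:: 0; 4; 5; 1; 3; 2]; [:: 0; 4; 5; 3; 1; 2];
     [:: 0; 5; 1; 2; 4; 3]; [:: 0; 5; 1; 3; 4; 2]; [:: 0; 5; 1; 4; 2; 3];
     [:: 0; 5; 1; 4; 3; 2]; [:: 0; 5; 3; 1; 4; 2]; [:: 0; 5; 3; 4; 1; 2];
     [:: 1; 0; 2; 3; 4; 5]; [:: 1; 3; 0; 2; 4; 5]; [:: 1; 3; 2; 0; 4; 5];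
     [:: 1; 4; 0; 2; 3; 5]; [:: 1; 4; 0; 3; 2; 5]; [:: 1; 4; 2; 3; 0; 5];
     [:: 1; 4; 3; 0; 2; 5]; [:: 1; 4; 3; 2; 0; 5]; [:: 1; 4; 5; 0; 2; 3];
     [:: 1; 4; 5; 0; 3; 2]; [:: 1; 4; 5; 2; 0; 3]; [:: 1; 4; 5; 2; 3; 0];
     [:: 1; 4; 5; 3; 0; 2]; [:: 1; 4; 5; 3; 2; 0]; [:: 3; 0; 1; 4; 2; 5];
     [:: 3; 0; 5; 1; 2; 4]; [:: 3; 1; 0; 4; 2; 5]; [:: 3; 1; 2; 4; 0; 5];
     [:: 3; 1; 5; 0; 2; 4]; [:: 3; 1; 5; 2; 0; 4]; [:: 3; 4; 0; 1; 2; 5];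
     [:: 3; 4; 1; 0; 2; 5]; [:: 3; 4; 1; 2; 0; 5]; [:: 3; 4; 5; 0; 1; 2];
     [:: 3; 4; 5; 1; 0; 2]; [:: 3; 4; 5; 1; 2; 0]; [:: 3; 5; 0; 1; 4; 2];
     [:: 3; 5; 0; 4; 1; 2]; [:: 3; 5; 1; 0; 4; 2]; [:: 3; 5; 1; 2; 4; 0];
     [:: 3; 5; 1; 4; 0; 2]; [:: 3; 5; 1; 4; 2; 0]; [:: 4; 0; 1; 2; 3; 5];
     [:: 4; 0; 1; 3; 2; 5]; [:: 4; 0; 5; 1; 3; 2]; [:: 4; 0; 5; 3; 1; 2];
     [:: 4; 1; 0; 2; 3; 5]; [:: 4; 1; 0; 3; 2; 5]; [:: 4; 1; 2; 3; 0; 5];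
     [:: 4; 1; 3; 0; 2; 5]; [:: 4; 1; 3; 2; 0; 5]; [:: 4; 1; 5; 0; 2; 3];
     [:: 4; 1; 5; 0; 3; 2]; [:: 4; 1; 5; 2; 3; 0]; [:: 4; 1; 5; 3; 0; 2];
     [:: 4; 1; 5; 3; 2; 0]; [:: 4; 3; 1; 0; 2; 5]; [:: 4; 3; 1; 2; 0; 5];
     [:: 4; 3; 5; 0; 1; 2]; [:: 4; 3; 5; 1; 0; 2]; [:: 4; 3; 5; 1; 2; 0];
     [:: 4; 5; 0; 1; 2; 3]; [:: 4; 5; 0; 1; 3; 2]; [:: 4; 5; 0; 3; 1; 2];
     [:: 4; 5; 1; 0; 2; 3]; [:: 4; 5; 1; 0; 3; 2]; [:: 4; 5; 1; 2; 0; 3];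
     [:: 4; 5; 1; 2; 3; 0]; [:: 4; 5; 1; 3; 0; 2]; [:: 4; 5; 1; 3; 2; 0];
     [:: 4; 5; 3; 0; 1; 2]; [:: 4; 5; 3; 1; 0; 2]; [:: 4; 5; 3; 1; 2; 0]]);
  ((-1)%Z, [::
     [:: 0; 1; 2; 3; 5; 4]; [:: 0; 1; 2; 5; 3; 4]; [:: 0; 1; 3; 2; 5; 4];
     [:: 0; 1; 3; 5; 2; 4]])];
 [::
  (1%Z, [::
     [:: 0; 1; 5; 2; 3; 4]; [:: 0; 1; 5; 3; 2; 4]; [:: 0; 2; 1; 3; 5; 4];
     [:: 0; 2; 1; 5; 3; 4]; [:: 0; 2; 3; 1; 5; 4]; [:: 0; 3; 1; 4; 2; 5];
     [:: 3; 0; 1; 4; 2; 5]; [:: 3; 1; 0; 2; 4; 5]; [:: 3; 1; 0; 4; 2; 5];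
     [:: 3; 1; 5; 2; 4; 0]; [:: 3; 1; 5; 4; 2; 0]; [:: 3; 2; 0; 1; 5; 4];
     [:: 3; 2; 1; 0; 5; 4]; [:: 3; 2; 1; 5; 0; 4]; [:: 4; 0; 1; 2; 3; 5];
     [:: 4; 0; 1; 3; 2; 5]; [:: 4; 1; 0; 2; 3; 5]; [:: 4; 1; 0; 3; 2; 5];
     [:: 4; 1; 5; 2; 3; 0]; [:: 4; 1; 5; 3; 2; 0]; [:: 4; 3; 1; 0; 2; 5];
     [:: 4; 3; 1; 2; 0; 5]]);
  ((-1)%Z, [::
     [:: 0; 1; 2; 3; 4; 5]; [:: 0; 1; 2; 4; 3; 5]; [:: 0; 2; 1; 3; 4; 5];
     [:: 2; 0; 1; 3; 4; 5]])];
 [::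
  (1%Z, [::
     [:: 0; 2; 1; 3; 4; 5]; [:: 0; 2; 5; 1; 4; 3]; [:: 0; 2; 5; 3; 4; 1];
     [:: 0; 4; 1; 2; 3; 5]; [:: 0; 4; 5; 1; 2; 3]; [:: 0; 5; 1; 2; 3; 4];
     [:: 0; 5; 1; 2; 4; 3]; [:: 0; 5; 1; 4; 2; 3]; [:: 0; 5; 2; 1; 3; 4];
     [:: 0; 5; 2; 1; 4; 3]; [:: 0; 5; 2; 3; 1; 4]; [:: 0; 5; 2; 3; 4; 1];
     [:: 0; 5; 2; 4; 1; 3]; [:: 0; 5; 2; 4; 3; 1]; [:: 2; 0; 1; 3; 4; 5];
     [:: 2; 0; 5; 1; 4; 3]; [:: 2; 0; 5; 3; 4; 1]; [:: 2; 3; 5; 0; 4; 1];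
     [:: 2; 3; 5; 1; 4; 0]; [:: 2; 4; 0; 1; 3; 5]; [:: 2; 4; 1; 0; 3; 5];
     [:: 2; 4; 1; 3; 0; 5]; [:: 2; 4; 5; 1; 0; 3]; [:: 2; 4; 5; 1; 3; 0];
     [:: 2; 5; 0; 1; 3; 4]; [:: 2; 5; 0; 1; 4; 3]; [:: 2; 5; 0; 3; 1; 4];
     [:: 2; 5; 0; 3; 4; 1]; [:: 2; 5; 0; 4; 1; 3]; [:: 2; 5; 0; 4; 3; 1];
     [:: 2; 5; 1; 0; 3; 4]; [:: 2; 5; 1; 0; 4; 3]; [:: 2; 5; 1; 3; 0; 4];
     [:: 2; 5; 1; 3; 4; 0]; [:: 2; 5; 1; 4; 0; 3]; [:: 2; 5; 1; 4; 3; 0];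
     [:: 2; 5; 3; 0; 1; 4]; [:: 2; 5; 3; 0; 4; 1]; [:: 2; 5; 3; 1; 0; 4];
     [:: 2; 5; 3; 1; 4; 0]; [:: 2; 5; 3; 4; 0; 1]; [:: 2; 5; 3; 4; 1; 0];
     [:: 4; 0; 1; 2; 3; 5]; [:: 4; 0; 5; 1; 2; 3]; [:: 4; 2; 0; 1; 3; 5];
     [:: 4; 2; 1; 0; 3; 5]; [:: 4; 2; 1; 3; 0; 5]; [:: 4; 2; 5; 1; 0; 3];
     [:: 4; 2; 5; 1; 3; 0]; [:: 4; 5; 0; 1; 2; 3]; [:: 4; 5; 0; 2; 1; 3];
     [:: 4; 5; 0; 2; 3; 1]; [:: 4; 5; 1; 0; 2; 3]; [:: 4; 5; 1; 2; 0; 3];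
     [:: 4; 5; 1; 2; 3; 0]; [:: 4; 5; 2; 0; 1; 3]; [:: 4; 5; 2; 0; 3; 1];
     [:: 4; 5; 2; 1; 0; 3]; [:: 4; 5; 2; 1; 3; 0]; [:: 4; 5; 2; 3; 0; 1];
     [:: 4; 5; 2; 3; 1; 0]])];
 [::
  (1%Z, [::
     [:: 0; 1; 2; 3; 4; 5]; [:: 0; 1; 2; 4; 3; 5]; [:: 0; 1; 5; 2; 4; 3];
     [:: 0; 2; 1; 3; 4; 5]; [:: 0; 2; 5; 3; 4; 1]; [:: 0; 5; 1; 2; 4; 3];
     [:: 0; 5; 2; 1; 4; 3]; [:: 0; 5; 2; 3; 4; 1]; [:: 0; 5; 2; 4; 1; 3];
     [:: 0; 5; 2; 4; 3; 1]; [:: 2; 0; 1; 3; 4; 5]; [:: 2; 0; 1; 4; 3; 5];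
     [:: 2; 0; 4; 1; 3; 5]; [:: 2; 0; 4; 3; 1; 5]; [:: 2; 0; 5; 1; 4; 3];
     [:: 2; 0; 5; 3; 4; 1]; [:: 2; 1; 0; 3; 4; 5]; [:: 2; 1; 0; 4; 3; 5];
     [:: 2; 1; 4; 0; 3; 5]; [:: 2; 1; 4; 3; 0; 5]; [:: 2; 1; 5; 0; 4; 3];
     [:: 2; 1; 5; 4; 0; 3]; [:: 2; 3; 0; 4; 1; 5]; [:: 2; 3; 1; 4; 0; 5];
     [:: 2; 3; 4; 0; 1; 5]; [:: 2; 3; 4; 1; 0; 5]; [:: 2; 3; 5; 0; 4; 1];
     [:: 2; 3; 5; 1; 4; 0]; [:: 2; 5; 0; 1; 4; 3]; [:: 2; 5; 0; 4; 1; 3];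
     [:: 2; 5; 1; 0; 4; 3]; [:: 2; 5; 1; 4; 0; 3]; [:: 2; 5; 4; 0; 1; 3];
     [:: 2; 5; 4; 1; 0; 3]; [:: 3; 2; 0; 1; 4; 5]; [:: 3; 2; 1; 0; 4; 5];
     [:: 3; 2; 5; 0; 4; 1]; [:: 3; 2; 5; 1; 4; 0]; [:: 3; 5; 2; 0; 4; 1];
     [:: 3; 5; 2; 1; 4; 0]; [:: 3; 5; 2; 4; 0; 1]; [:: 3; 5; 2; 4; 1; 0]])];
 [::
  (1%Z, [::
     [:: 0; 1; 3; 2; 4; 5]; [:: 0; 1; 3; 4; 2; 5]; [:: 0; 2; 3; 1; 4; 5];
     [:: 0; 2; 3; 4; 1; 5]; [:: 0; 4; 3; 1; 2; 5]; [:: 1; 0; 3; 2; 4; 5];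
     [:: 2; 0; 3; 1; 4; 5]; [:: 2; 0; 3; 4; 1; 5]; [:: 2; 4; 3; 0; 1; 5];
     [:: 2; 4; 3; 1; 0; 5]; [:: 4; 0; 3; 1; 2; 5]; [:: 4; 0; 3; 2; 1; 5];
     [:: 4; 1; 3; 0; 2; 5]; [:: 4; 1; 3; 2; 0; 5]; [:: 4; 2; 3; 0; 1; 5];
     [:: 4; 2; 3; 1; 0; 5]])];
 [::
  (1%Z, [::
     [:: 0; 1; 2; 3; 4; 5]; [:: 0; 1; 2; 4; 3; 5]; [:: 0; 1; 3; 2; 4; 5];
     [:: 0; 1; 3; 4; 2; 5]; [:: 0; 1; 4; 2; 3; 5]; [:: 0; 2; 1; 3; 4; 5];
     [:: 0; 2; 1; 4; 3; 5]; [:: 0; 2; 3; 1; 4; 5]; [:: 0; 2; 3; 4; 1; 5];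
     [:: 0; 2; 4; 1; 3; 5]; [:: 0; 3; 4; 1; 2; 5]; [:: 1; 0; 4; 2; 3; 5];
     [:: 2; 0; 4; 1; 3; 5]; [:: 3; 0; 4; 1; 2; 5]; [:: 3; 2; 0; 1; 4; 5];
     [:: 3; 2; 0; 4; 1; 5]; [:: 3; 2; 1; 0; 4; 5]; [:: 3; 2; 1; 4; 0; 5]])]].

Definition y_data : seq (nat * nat * seq (seq nat)) := [::
 (0, 1, [::
    [:: 0; 1; 2; 3; 4; 5]; [:: 0; 1; 3; 2; 4; 5]; [:: 0; 4; 1; 2; 3; 5];
    [:: 0; 4; 1; 3; 2; 5]; [:: 0; 4; 5; 1; 2; 3]; [:: 0; 4; 5; 1; 3; 2];
    [:: 2; 4; 5; 0; 1; 3]; [:: 2; 5; 0; 1; 3; 4]; [:: 2; 5; 0; 1; 4; 3];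
    [:: 2; 5; 0; 4; 1; 3]; [:: 4; 0; 1; 2; 3; 5]; [:: 4; 0; 1; 3; 2; 5];
    [:: 4; 0; 2; 1; 3; 5]; [:: 4; 0; 5; 1; 3; 2]; [:: 4; 0; 5; 2; 1; 3];
    [:: 4; 2; 0; 1; 3; 5]; [:: 4; 2; 5; 0; 1; 3]; [:: 4; 5; 0; 1; 2; 3];
    [:: 4; 5; 0; 2; 1; 3]]);
 (0, 2, [::
    [:: 0; 1; 2; 3; 4; 5]; [:: 0; 1; 4; 2; 3; 5]; [:: 0; 1; 5; 2; 3; 4];
    [:: 0; 1; 5; 2; 4; 3]; [:: 2; 0; 1; 3; 4; 5]; [:: 2; 0; 1; 4; 3; 5];
    [:: 2; 0; 5; 1; 4; 3]; [:: 2; 3; 0; 1; 4; 5]; [:: 2; 5; 0; 1; 4; 3];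
    [:: 3; 0; 2; 1; 4; 5]; [:: 3; 0; 5; 1; 2; 4]; [:: 3; 0; 5; 2; 1; 4];
    [:: 3; 5; 0; 1; 2; 4]; [:: 3; 5; 0; 2; 1; 4]; [:: 3; 5; 2; 0; 1; 4]]);
 (0, 3, [::
    [:: 0; 3; 1; 2; 4; 5]; [:: 0; 4; 1; 3; 2; 5]; [:: 0; 4; 3; 1; 2; 5];
    [:: 0; 4; 5; 1; 2; 3]; [:: 0; 4; 5; 1; 3; 2]; [:: 0; 4; 5; 3; 1; 2];
    [:: 3; 0; 1; 4; 2; 5]; [:: 3; 0; 5; 1; 2; 4]; [:: 3; 4; 0; 1; 2; 5];
    [:: 3; 4; 5; 0; 1; 2]; [:: 3; 5; 0; 1; 4; 2]; [:: 3; 5; 0; 4; 1; 2];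
    [:: 4; 0; 1; 3; 2; 5]; [:: 4; 0; 5; 1; 3; 2]; [:: 4; 0; 5; 3; 1; 2];
    [:: 4; 3; 5; 0; 1; 2]; [:: 4; 5; 0; 1; 2; 3]; [:: 4; 5; 0; 1; 3; 2];
    [:: 4; 5; 0; 3; 1; 2]]);
 (0, 4, [::
    [:: 3; 0; 1; 2; 4; 5]; [:: 3; 0; 1; 4; 2; 5]; [:: 3; 2; 0; 1; 5; 4];
    [:: 4; 0; 1; 2; 3; 5]; [:: 4; 0; 1; 3; 2; 5]]);
 (0, 5, [::
    [:: 2; 3; 5; 0; 4; 1]; [:: 2; 4; 0; 1; 3; 5]; [:: 2; 5; 0; 1; 3; 4];
    [:: 2; 5; 0; 1; 4; 3]; [:: 2; 5; 0; 3; 1; 4]; [:: 2; 5; 0; 3; 4; 1];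
    [:: 2; 5; 0; 4; 1; 3]; [:: 2; 5; 0; 4; 3; 1]; [:: 2; 5; 3; 0; 1; 4];
    [:: 2; 5; 3; 0; 4; 1]; [:: 2; 5; 3; 4; 0; 1]; [:: 4; 2; 0; 1; 3; 5];
    [:: 4; 5; 0; 1; 2; 3]; [:: 4; 5; 0; 2; 1; 3]; [:: 4; 5; 0; 2; 3; 1];
    [:: 4; 5; 2; 0; 3; 1]; [:: 4; 5; 2; 3; 0; 1]]);
 (0, 6, [::
    [:: 2; 0; 1; 3; 4; 5]; [:: 2; 0; 1; 4; 3; 5]; [:: 2; 0; 4; 1; 3; 5];
    [:: 2; 0; 4; 3; 1; 5]; [:: 2; 0; 5; 1; 4; 3]; [:: 2; 0; 5; 4; 1; 3];
    [:: 2; 3; 0; 4; 1; 5]; [:: 2; 3; 4; 0; 1; 5]; [:: 2; 3; 5; 0; 4; 1];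
    [:: 2; 5; 0; 1; 4; 3]; [:: 2; 5; 0; 4; 1; 3]; [:: 2; 5; 4; 0; 1; 3];
    [:: 3; 2; 0; 1; 4; 5]; [:: 3; 2; 5; 0; 4; 1]; [:: 3; 5; 2; 0; 4; 1];
    [:: 3; 5; 2; 4; 0; 1]]);
 (0, 7, [::
    [:: 0; 1; 3; 2; 4; 5]; [:: 2; 4; 3; 0; 1; 5]; [:: 4; 0; 3; 1; 2; 5];
    [:: 4; 0; 3; 2; 1; 5]; [:: 4; 2; 3; 0; 1; 5]]);
 (0, 8, [::
    [:: 0; 1; 4; 2; 3; 5]; [:: 3; 2; 0; 1; 4; 5]; [:: 3; 2; 0; 4; 1; 5]]);
 (1, 2, [::
    [:: 0; 1; 2; 3; 4; 5]; [:: 0; 1; 5; 2; 3; 4]; [:: 0; 1; 5; 3; 2; 4];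
    [:: 0; 3; 1; 2; 4; 5]; [:: 0; 3; 2; 1; 4; 5]; [:: 0; 3; 2; 4; 1; 5];
    [:: 0; 3; 4; 1; 2; 5]; [:: 0; 3; 5; 1; 4; 2]; [:: 0; 3; 5; 2; 1; 4];
    [:: 0; 3; 5; 2; 4; 1]; [:: 0; 3; 5; 4; 2; 1]; [:: 0; 5; 1; 2; 3; 4];
    [:: 0; 5; 1; 3; 2; 4]; [:: 0; 5; 2; 1; 3; 4]; [:: 0; 5; 2; 3; 1; 4];
    [:: 0; 5; 2; 3; 4; 1]; [:: 0; 5; 3; 1; 2; 4]; [:: 0; 5; 3; 2; 1; 4];
    [:: 0; 5; 3; 2; 4; 1]; [:: 0; 5; 3; 4; 2; 1]; [:: 2; 0; 1; 3; 4; 5];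
    [:: 2; 0; 3; 1; 4; 5]; [:: 2; 0; 3; 4; 1; 5]]);
 (1, 3, [::
    [:: 0; 1; 2; 4; 3; 5]; [:: 0; 1; 3; 4; 2; 5]; [:: 0; 1; 5; 2; 3; 4];
    [:: 0; 1; 5; 3; 2; 4]; [:: 0; 3; 1; 4; 2; 5]; [:: 0; 3; 5; 1; 2; 4];
    [:: 0; 4; 1; 2; 3; 5]; [:: 0; 4; 1; 3; 2; 5]; [:: 0; 4; 3; 1; 2; 5];
    [:: 0; 4; 5; 1; 2; 3]; [:: 0; 4; 5; 1; 3; 2]; [:: 0; 4; 5; 3; 1; 2];
    [:: 0; 5; 1; 2; 4; 3]; [:: 0; 5; 1; 3; 4; 2]; [:: 0; 5; 1; 4; 2; 3];
    [:: 0; 5; 1; 4; 3; 2]; [:: 0; 5; 3; 1; 4; 2]; [:: 0; 5; 3; 4; 1; 2];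
    [:: 1; 0; 2; 3; 4; 5]; [:: 1; 0; 3; 2; 4; 5]; [:: 1; 4; 0; 2; 3; 5];
    [:: 1; 4; 0; 3; 2; 5]; [:: 1; 4; 5; 0; 2; 3]; [:: 1; 4; 5; 0; 3; 2];
    [:: 4; 0; 1; 2; 3; 5]; [:: 4; 0; 1; 3; 2; 5]; [:: 4; 0; 5; 1; 3; 2];
    [:: 4; 0; 5; 3; 1; 2]; [:: 4; 1; 0; 2; 3; 5]; [:: 4; 1; 0; 3; 2; 5];
    [:: 4; 1; 5; 0; 2; 3]; [:: 4; 1; 5; 0; 3; 2]; [:: 4; 5; 0; 1; 2; 3];
    [:: 4; 5; 0; 1; 3; 2]; [:: 4; 5; 0; 3; 1; 2]]);
 (1, 4, [::
    [:: 0; 1; 3; 2; 4; 5]; [:: 0; 1; 3; 4; 2; 5]; [:: 0; 1; 5; 2; 4; 3];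
    [:: 0; 1; 5; 4; 2; 3]; [:: 0; 2; 1; 3; 5; 4]; [:: 0; 2; 1; 5; 3; 4];
    [:: 0; 2; 3; 1; 5; 4]; [:: 0; 3; 1; 4; 2; 5]; [:: 4; 0; 1; 2; 3; 5];
    [:: 4; 0; 1; 3; 2; 5]]);
 (1, 5, [::
    [:: 0; 2; 5; 1; 4; 3]; [:: 0; 2; 5; 3; 4; 1]; [:: 0; 4; 1; 2; 3; 5];
    [:: 0; 4; 5; 1; 2; 3]; [:: 0; 5; 1; 2; 3; 4]; [:: 0; 5; 1; 2; 4; 3];
    [:: 0; 5; 1; 4; 2; 3]; [:: 0; 5; 2; 1; 3; 4]; [:: 0; 5; 2; 1; 4; 3];
    [:: 0; 5; 2; 3; 1; 4]; [:: 0; 5; 2; 3; 4; 1]; [:: 0; 5; 2; 4; 1; 3];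
    [:: 0; 5; 2; 4; 3; 1]; [:: 4; 0; 1; 2; 3; 5]; [:: 4; 0; 5; 1; 2; 3];
    [:: 4; 5; 0; 1; 2; 3]; [:: 4; 5; 0; 2; 1; 3]; [:: 4; 5; 0; 2; 3; 1]]);
 (1, 6, [::
    [:: 0; 2; 1; 3; 4; 5]; [:: 0; 2; 3; 1; 4; 5]; [:: 0; 2; 5; 1; 4; 3];
    [:: 0; 2; 5; 3; 4; 1]; [:: 0; 5; 2; 1; 4; 3]; [:: 0; 5; 2; 3; 4; 1];
    [:: 0; 5; 2; 4; 1; 3]; [:: 0; 5; 2; 4; 3; 1]; [:: 2; 0; 1; 4; 3; 5];
    [:: 2; 0; 3; 4; 1; 5]; [:: 2; 0; 4; 1; 3; 5]; [:: 2; 0; 4; 3; 1; 5];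
    [:: 2; 0; 5; 1; 4; 3]; [:: 2; 0; 5; 3; 4; 1]]);
 (1, 8, [::
    [:: 0; 2; 1; 3; 4; 5]; [:: 0; 2; 1; 4; 3; 5]; [:: 0; 2; 3; 1; 4; 5];
    [:: 0; 2; 3; 4; 1; 5]; [:: 0; 3; 4; 1; 2; 5]]);
 (2, 3, [::
    [:: 0; 1; 2; 3; 4; 5]; [:: 0; 1; 3; 2; 4; 5]; [:: 0; 1; 3; 4; 2; 5];
    [:: 0; 1; 4; 2; 3; 5]; [:: 0; 1; 5; 2; 3; 4]; [:: 0; 1; 5; 4; 2; 3];
    [:: 0; 3; 1; 2; 4; 5]; [:: 0; 3; 1; 4; 2; 5]; [:: 0; 3; 5; 1; 2; 4];
    [:: 0; 4; 1; 2; 3; 5]; [:: 0; 5; 1; 2; 3; 4]; [:: 0; 5; 1; 2; 4; 3];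
    [:: 0; 5; 1; 3; 2; 4]; [:: 0; 5; 1; 3; 4; 2]; [:: 0; 5; 1; 4; 2; 3];
    [:: 0; 5; 1; 4; 3; 2]; [:: 0; 5; 3; 1; 2; 4]; [:: 0; 5; 3; 1; 4; 2];
    [:: 0; 5; 3; 4; 1; 2]; [:: 1; 0; 2; 3; 4; 5]; [:: 1; 0; 4; 2; 3; 5];
    [:: 1; 0; 5; 2; 3; 4]; [:: 1; 0; 5; 2; 4; 3]]);
 (2, 4, [::
    [:: 0; 1; 4; 2; 3; 5]; [:: 0; 1; 4; 3; 2; 5]; [:: 0; 1; 5; 2; 3; 4];
    [:: 0; 1; 5; 3; 2; 4]; [:: 0; 3; 1; 2; 4; 5]; [:: 0; 3; 1; 4; 2; 5];
    [:: 0; 4; 1; 3; 2; 5]]);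
 (2, 5, [::
    [:: 0; 2; 1; 3; 4; 5]; [:: 0; 2; 4; 1; 3; 5]; [:: 0; 2; 5; 1; 3; 4];
    [:: 0; 2; 5; 1; 4; 3]; [:: 0; 4; 1; 2; 3; 5]; [:: 0; 4; 5; 1; 2; 3];
    [:: 0; 5; 1; 2; 3; 4]; [:: 0; 5; 1; 2; 4; 3]; [:: 0; 5; 1; 4; 2; 3];
    [:: 0; 5; 2; 1; 4; 3]; [:: 0; 5; 2; 4; 1; 3]; [:: 2; 0; 1; 3; 4; 5];
    [:: 2; 0; 4; 1; 3; 5]; [:: 2; 0; 5; 1; 3; 4]; [:: 2; 0; 5; 1; 4; 3]]);
 (2, 6, [::
    [:: 0; 1; 2; 3; 4; 5]; [:: 0; 1; 2; 4; 3; 5]; [:: 0; 1; 5; 2; 4; 3];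
    [:: 0; 5; 1; 2; 4; 3]; [:: 0; 5; 2; 1; 4; 3]; [:: 0; 5; 2; 4; 1; 3]]);
 (2, 7, [::
    [:: 0; 1; 3; 2; 4; 5]; [:: 0; 1; 3; 4; 2; 5]; [:: 0; 2; 3; 1; 4; 5];
    [:: 0; 2; 3; 4; 1; 5]; [:: 0; 4; 3; 1; 2; 5]; [:: 2; 0; 3; 1; 4; 5];
    [:: 2; 0; 3; 4; 1; 5]]);
 (3, 4, [::
    [:: 0; 1; 2; 3; 5; 4]; [:: 0; 1; 2; 5; 3; 4]; [:: 0; 1; 3; 2; 5; 4]]);
 (3, 7, [::
    [:: 0; 1; 3; 4; 2; 5]; [:: 1; 0; 3; 2; 4; 5]]);
 (3, 8, [::
    [:: 0; 1; 2; 3; 4; 5]; [:: 0; 1; 2; 4; 3; 5]; [:: 0; 1; 3; 2; 4; 5];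
    [:: 0; 1; 3; 4; 2; 5]; [:: 0; 1; 4; 2; 3; 5]; [:: 1; 0; 4; 2; 3; 5]]);
 (4, 5, [::
    [:: 0; 1; 2; 3; 4; 5]; [:: 0; 1; 2; 3; 5; 4]; [:: 0; 1; 2; 4; 3; 5];
    [:: 0; 1; 2; 5; 3; 4]; [:: 0; 2; 1; 3; 4; 5]; [:: 2; 0; 1; 3; 4; 5]]);
 (4, 6, [::
    [:: 0; 1; 2; 3; 4; 5]; [:: 0; 1; 2; 4; 3; 5]; [:: 0; 1; 5; 2; 4; 3];
    [:: 0; 2; 1; 3; 4; 5]; [:: 2; 0; 1; 3; 4; 5]]);
 (5, 8, [::
    [:: 0; 1; 2; 3; 4; 5]; [:: 0; 1; 2; 4; 3; 5]; [:: 0; 2; 4; 1; 3; 5];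
    [:: 2; 0; 4; 1; 3; 5]]);
 (6, 7, [::
    [:: 0; 2; 3; 1; 4; 5]; [:: 2; 0; 3; 4; 1; 5]])].

Definition ungroup (G : seq (int * seq (seq nat))) : word_sum :=
  [seq (c.1, g) | c <- G, g <- c.2].

Definition x_words (e : nat) : word_sum := ungroup (nth [::] x_data e).

Definition y_words (e f : nat) : word_sum :=
  ungroup [seq (1%Z, p.2) | p <- y_data & p.1 == (e, f)].

Definition psi_pairs : seq (seq (nat * nat)) :=
  [:: [::]; [:: (0, 1)]; [:: (0, 2)]; [:: (0, 1)]; [:: (1, 3)]; [:: (0, 2); (1, 2)];
      [::]; [::]; [::]].

Definition psi_weight (e a b : nat) : bool :=
  has (fun p => (p == (a, b)) || (p == (b, a))) (nth [::] psi_pairs e).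

Definition x_term (e : nat) : word_sum :=
  ws_mul (x_words e) (stab_words 6 K33_nat [:: e]).

Definition y_term (e f : nat) : word_sum :=
  ws_mul (y_words e f) (stab_words 6 K33_nat [:: e; f]).

Definition bd_term (f : nat) : word_sum :=
  flatten [seq ws_scale ((-1) ^+ (f < e))%R (y_term (minn e f) (maxn e f))
          | e <- iota 0 9 & e != f].

Lemma K33_reach_closed2 :
  all (fun e => all (fun f => reach_closed 6 K33_nat [:: e; f]) (iota 0 9)) (iota 0 9).
Proof. by vm_compute. Qed.

Lemma K33_reach_closed1 : all (fun e => reach_closed 6 K33_nat [:: e]) (iota 0 9).
Proof. by vm_compute. Qed.

Lemma certificate_words : all (fun e => perm_words 6 (x_words e) &&
  all (fun f => perm_words 6 (y_words e f)) (iota 0 9)) (iota 0 9).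
Proof. by vm_compute. Qed.

Lemma certificate_cycle : ws_eqb (flatten [seq x_term e | e <- iota 0 9]) [::].
Proof. by vm_compute. Qed.

Lemma certificate_bd : all (fun f => ws_eqb (bd_term f) (x_term f ++ x_term f)) (iota 0 9).
Proof. by vm_compute. Qed.

Lemma certificate_coset_parity :
  all (fun e => all (fun f => let S := stab_words 6 K33_nat [:: e; f] in
    all (fun a => all (fun b => \sum_(p <- S)
      ((psi_weight e (nth 0%N p.2 a) (nth 0%N p.2 b))%:R +
       (psi_weight f (nth 0%N p.2 a) (nth 0%N p.2 b))%:R) == 0 :> 'Z_2)%R
    (iota 0 6)) (iota 0 6)) (iota 0 9)) (iota 0 9).
Proof. by rewrite unlock; vm_compute. Qed.

Lemma certificate_psi :
  (\sum_(e <- iota 0 9) \sum_(p <- x_term e)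
     p.1%:~R * (psi_weight e (nth 0%N p.2 0) (nth 0%N p.2 2))%:R == 1 :> 'Z_2)%R.
Proof. by rewrite unlock; vm_compute. Qed.

Local Open Scope ring_scope.

Lemma x_words_ok (e : 'I_9) : perm_words 6 (x_words e).
Proof. by have /andP [] := all_iota_lt (ltn_ord e) certificate_words. Qed.

Lemma y_words_ok (e f : 'I_9) : perm_words 6 (y_words e f).
Proof.
by have /andP [_ /(all_iota_lt (ltn_ord f))] := all_iota_lt (ltn_ord e) certificate_words.
Qed.

Lemma x_term_ok (e : 'I_9) : perm_words 6 (x_term e).
Proof. exact: perm_words_mul (x_words_ok e) (perm_words_stab _ _ _). Qed.

Lemma aF_K33_1 (e : 'I_9) : @aF 6 K33 [set e] = zs_of 6 (stab_words 6 K33_nat [:: val e]).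
Proof.
have Ee : @edge_indices _ K33 [set e] = [:: val e] by rewrite /edge_indices enum_set1.
by rewrite (aF_stab_words K33_natE) Ee //; exact: all_iota_lt (ltn_ord e) K33_reach_closed1.
Qed.

Lemma aF_K33_2 (e f : 'I_9) : (e < f)%N ->
  @aF 6 K33 [set e; f] = zs_of 6 (stab_words 6 K33_nat [:: val e; val f]).
Proof.
move=> lt_ef; have Ee : @edge_indices _ K33 [set e; f] = [:: val e; val f].
  by rewrite /edge_indices enum_set2_ord.
rewrite (aF_stab_words K33_natE) Ee //.
exact: all_iota_lt (ltn_ord f) (all_iota_lt (ltn_ord e) K33_reach_closed2).
Qed.

Definition x_chain : chain K33 := [ffun F : {set 'I_9} =>
  if enum F is [:: e] then zmul (zs_of 6 (x_words e)) (@aF _ K33 F) else 0 : ZS 6].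

Definition y_chain : chain K33 := [ffun F : {set 'I_9} =>
  if enum F is [:: e; f] then zmul (zs_of 6 (y_words e f)) (@aF _ K33 F) else 0 : ZS 6].

Lemma x_chain_is_chain : is_chain 1 x_chain.
Proof.
split=> F; rewrite ffunE; first by rewrite cardE; case: (enum F) => [|e [|? ?]].
by case: (enum F) => [|e [|? ?]]; [exact: inM0 | exists (zs_of 6 (x_words e)) | exact: inM0].
Qed.

Lemma y_chain_is_chain : is_chain 2 y_chain.
Proof.
split=> F; rewrite ffunE; first by rewrite cardE; case: (enum F) => [|e [|f [|? ?]]].
case: (enum F) => [|e [|f [|? ?]]]; try exact: inM0.
by exists (zs_of 6 (y_words e f)).
Qed.

Lemma x_chain1 (e : 'I_9) : x_chain [set e] = zs_of 6 (x_term e).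
Proof.
rewrite ffunE enum_set1 aF_K33_1 zmul_zs_of //; [exact: x_words_ok | exact: perm_words_stab].
Qed.

Lemma y_chain2 (e f : 'I_9) : (e < f)%N -> y_chain [set e; f] = zs_of 6 (y_term e f).
Proof.
move=> lt_ef; rewrite ffunE (enum_set2_ord lt_ef) (aF_K33_2 lt_ef) zmul_zs_of /y_term.
- by [].
- exact: y_words_ok.
- exact: perm_words_stab.
Qed.

Lemma y_chainU (e f : 'I_9) : e != f ->
  y_chain (e |: [set f]) = zs_of 6 (y_term (minn e f) (maxn e f)).
Proof.
case: (ltngtP e f) => [lt_ef | lt_fe | /val_inj ->]; last by rewrite eqxx.
  by rewrite y_chain2.
by rewrite setUC y_chain2.
Qed.

Lemma bd_x_chain : bd x_chain = 0.
Proof.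
apply/ffunP => F; rewrite !ffunE.
have [-> | [g gF]] := set_0Vmem F; last first.
  have F_gt0 : (0 < #|F|)%N by apply/card_gt0P; exists g.
  rewrite big1 // => e eF; rewrite x_chain_is_chain.1 ?mul0rz // cardsU1 eF.
  by case: #|F| F_gt0.
transitivity (zs_of 6 (flatten [seq x_term e | e <- iota 0 9])); last first.
  by rewrite (zs_of_eq 6 certificate_cycle) zs_of_nil.
rewrite zs_of_flatten big_map (_ : iota 0 9 = index_iota 0 9) // big_mkord.
apply: eq_big => [e | e _]; first by rewrite in_set0.
rewrite setU0 x_chain1 (_ : [set _ in _ | _] = set0) ?cards0 ?expr0 ?mulr1z //.
by apply/setP => f; rewrite !inE; case: eqP => // ->; rewrite ltnn.
Qed.

Lemma bd_y_chain : bd y_chain = x_chain *+ 2.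
Proof.
apply/ffunP => F; rewrite ffunMnE ffunE.
case: (boolP (#|F| == 1%N)) => [/cards1P [f ->] | F1]; last first.
  rewrite x_chain_is_chain.1 ?mul0rn; last exact/eqP.
  rewrite big1 // => e eF; rewrite y_chain_is_chain.1 ?mul0rz // cardsU1 eF add1n.
  by move=> [/eqP]; rewrite (negbTE F1).
rewrite x_chain1 mulr2n -zs_of_cat -(zs_of_eq 6 (all_iota_lt (ltn_ord f) certificate_bd)).
rewrite zs_of_flatten big_map big_filter (_ : iota 0 9 = index_iota 0 9) // big_mkord.
apply: eq_big => [e | e]; first by rewrite in_set1.
by rewrite in_set1 => ef; rewrite y_chainU // card_lt_pair zs_of_scale.
Qed.

Definition psi (e : 'I_9) (s : {perm 'I_6}) : 'Z_2 :=
  (psi_weight e (nth 0%N (perm_word s) 0) (nth 0%N (perm_word s) 2))%:R.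

Lemma psi_coset (e f : 'I_9) t : (e < f)%N ->
  \sum_s (@aF 6 K33 [set e; f] s)%:~R * (psi e (t * s)%g + psi f (t * s)%g) = 0.
Proof.
move=> lt_ef; rewrite aF_K33_2 // sum_zs_of ?perm_words_stab //.
set a := nth 0%N (perm_word t) 0; set b := nth 0%N (perm_word t) 2.
have psiE (h : 'I_9) g : perm_eq g (iota 0 6) ->
    psi h (t * word_perm 6 g)%g = (psi_weight h (nth 0%N g a) (nth 0%N g b))%:R.
  by move=> wg; rewrite /psi perm_wordM word_permK // /word_mul !(nth_map 0%N) ?size_perm_word.
transitivity (\sum_(p <- stab_words 6 K33_nat [:: val e; val f])
    ((psi_weight e (nth 0%N p.2 a) (nth 0%N p.2 b))%:R +
     (psi_weight f (nth 0%N p.2 a) (nth 0%N p.2 b))%:R : 'Z_2)).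
  apply: eq_big_seq => _ /mapP [g + ->]; rewrite mem_filter mem_permutations => /andP [_ wg].
  by rewrite mulr1z mul1r !psiE.
apply/eqP; move: certificate_coset_parity.
move=> /(all_iota_lt (ltn_ord e)) /(all_iota_lt (ltn_ord f)).
by move=> /(all_iota_lt (@nth_perm_word_lt 6 t 0 isT))
  /(all_iota_lt (@nth_perm_word_lt 6 t 2 isT)).
Qed.

Lemma psi_x_chain : pairing (E := K33) psi x_chain = 1.
Proof.
rewrite -(eqP certificate_psi) (_ : iota 0 9 = index_iota 0 9) // big_mkord.
apply: eq_bigr => e _; rewrite x_chain1 sum_zs_of ?x_term_ok //.
by apply: eq_big_seq => p /(allP (x_term_ok e)) wp; rewrite /psi word_permK.
Qed.

Theorem theorem4p2 : H1_has_2torsion K33.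
Proof.
exists x_chain; split.
- exact: x_chain_is_chain.
- exact: bd_x_chain.
- move=> [y [[_ yM] bd_y]]; have := @pairing_bd 6 K33 psi y psi_coset yM.
  by rewrite bd_y psi_x_chain => /eqP; rewrite oner_eq0.
- by exists y_chain; split; [exact: y_chain_is_chain | exact: bd_y_chain].
Qed.
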